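(* Let $A$ be a real unital $^*$-algebra with underlying vector space $\mathbb{R}^n$ whose Hermitian elements are real, and let $N(s)=ss^*$ be its Algebraic Norm. Then, on a sufficiently small neighborhood of $\mathbf{1}$, $N(s)$ is the square of a special unital norm of $A$; that is, $\sqrt{N(s)}$ is a special unital norm.
   Context: $A$ is a real unital algebra (bilinear product, not necessarily associative) on $\mathbb{R}^n$ with the standard basis, equipped with an involutive antiautomorphism $s\mapsto s^*$ (linear, $(st)^*=t^*s^*$, $s^{**}=s$) such that every $s$ with $s^*=s$ is a real multiple of the identity $\mathbf{1}$; then $ss^*=s^*s$ is real, and for $ss^*\neq0$ the inverse is $s^{-1}=s^*/(ss^* )$. The Algebraic Norm is $N(s)=ss^*\in\mathbb{R}$. For these algebras one sets $\|\mathbf{1}\|^2=1$. With $s$ a column vector, $\mathbf{d}s$ the column of coordinate differentials and ''$\cdot$'' the Euclidean dot product: a normalized uncurling metric is a real symmetric $n\times n$ matrix $L$ with $d\big((s^{-1})^TL\,\mathbf{d}s\big)=0$ on an open ball centered at $\mathbf{1}$ consisting of units and with $s^TLs^{-1}=\|\mathbf{1}\|^2$ near $\mathbf{1}$; the associated special unital norm is $\ell_{\rm sp}(s)=\exp\!\big(\frac{1}{\|\mathbf{1}\|^2}\int_{\mathbf{1}}^s[Lt^{-1}]\cdot\mathbf{d}t\big)$ near $\mathbf{1}$. *)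

From HB Require Import structures.
From mathcomp Require Import all_boot all_order all_algebra.
From mathcomp Require Import all_classical all_reals all_analysis.
Set Implicit Arguments. Unset Strict Implicit. Unset Printing Implicit Defensive.
Import Order.TTheory GRing.Theory Num.Theory.
Import numFieldNormedType.Exports.
Local Open Scope classical_set_scope.
Local Open Scope ring_scope.

Definition vdot (R : realType) (n : nat) (u v : 'cV[R]_n) : R :=
  \sum_(i < n) u i 0 * v i 0.

Definition eball (R : realType) (n : nat) (c : 'cV[R]_n) (r : R) (s : 'cV[R]_n) : Prop :=
  \sum_(i < n) (s i 0 - c i 0) ^+ 2 < r ^+ 2.

(* The standing assumptions: a real unital algebra (bilinear, not necessarily
   associative) on R^n, with an involutive linear antiautomorphism whose
   Hermitian (self-adjoint) elements are real multiples of the identity. *)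
Definition real_star_algebra (R : realType) (n : nat)
  (mul : 'cV[R]_n -> 'cV[R]_n -> 'cV[R]_n) (one : 'cV[R]_n)
  (star : 'cV[R]_n -> 'cV[R]_n) : Prop :=
  (forall (a : R) x y z, mul (a *: x + y) z = a *: mul x z + mul y z) /\
      (forall (a : R) x y z, mul z (a *: x + y) = a *: mul z x + mul z y) /\
      (forall x, mul one x = x /\ mul x one = x) /\
      one != 0 /\
      (forall (a : R) x y, star (a *: x + y) = a *: star x + star y) /\
      (forall x y, star (mul x y) = mul (star y) (star x)) /\
      (forall x, star (star x) = x) /\
      (forall x, star x = x -> exists c : R, x = c *: one).

(* N is the Algebraic Norm: s star(s) = N(s) 1 (N(s) is well defined since 1 <> 0). *)
Definition is_algebraic_norm (R : realType) (n : nat)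
  (mul : 'cV[R]_n -> 'cV[R]_n -> 'cV[R]_n) (one : 'cV[R]_n)
  (star : 'cV[R]_n -> 'cV[R]_n) (N : 'cV[R]_n -> R) : Prop :=
  forall s, mul s (star s) = N s *: one.

(* s^{-1} = star(s) / N(s), meaningful when N s <> 0 (s is a unit). *)
Definition ainv (R : realType) (n : nat) (star : 'cV[R]_n -> 'cV[R]_n)
  (N : 'cV[R]_n -> R) (s : 'cV[R]_n) : 'cV[R]_n :=
  (N s)^-1 *: star s.

(* The 1-form (s^{-1})^T L ds, written as the coefficient column L s^{-1}
   (L symmetric). *)
Definition uform (R : realType) (n : nat) (star : 'cV[R]_n -> 'cV[R]_n)
  (N : 'cV[R]_n -> R) (L : 'M[R]_n) (s : 'cV[R]_n) : 'cV[R]_n :=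
  L *m ainv star N s.

(* Normalized uncurling metric (with ||1||^2 = 1), closedness holding on the
   open ball of radius r0 centered at 1, which consists of units. *)
Definition normalized_uncurling_metric (R : realType) (n : nat)
  (one : 'cV[R]_n) (star : 'cV[R]_n -> 'cV[R]_n) (N : 'cV[R]_n -> R)
  (L : 'M[R]_n) (r0 : R) : Prop :=
  [/\ L^T = L, 0 < r0,
      (forall s, eball one r0 s -> N s != 0),
      (* d((s^{-1})^T L ds) = 0 on the ball *)
      (forall s, eball one r0 s -> forall i j : 'I_n,
          derivable (fun t => uform star N L t i 0) s (delta_mx j 0) /\
          derivable (fun t => uform star N L t j 0) s (delta_mx i 0) /\
          'D_(delta_mx j 0) (fun t => uform star N L t i 0) s =
          'D_(delta_mx i 0) (fun t => uform star N L t j 0) s) &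
      (* s^T L s^{-1} = ||1||^2 = 1 near 1 *)
      (exists r1 : R, 0 < r1 /\ forall s, eball one r1 s ->
          vdot s (L *m ainv star N s) = 1)].

(* The associated special unital norm: exp of the line integral of the closed
   form from 1 to s (taken along the segment [1, s], which lies in the ball;
   path independent there since the form is closed). ||1||^2 = 1. *)
Definition special_unital_norm (R : realType) (n : nat)
  (one : 'cV[R]_n) (star : 'cV[R]_n -> 'cV[R]_n) (N : 'cV[R]_n -> R)
  (L : 'M[R]_n) (s : 'cV[R]_n) : R :=
  expR (\int[@lebesgue_measure R]_(t in `[0%R, 1%R])
          vdot (uform star N L (one + t *: (s - one))) (s - one)).

(* Let re z be the real part of z, i.e. z + z^* = 2 re(z) 1.  Then
   polar x y := re (x y^* ) is a symmetric bilinear form with N s = polar s s,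
   and for the Gram matrix L of (x, y) |-> re (x y) the vector L s^* lists the
   coordinates of polar s.  Hence the 1-form (s^-1)^T L ds is
   polar s ds / N s = d (ln (sqrt (N s))): it is closed, s^T L s^-1 = 1, and its
   integral along [1, s] is ln (sqrt (N s)) since N 1 = 1.  N stays positive on
   a ball around 1 because N s - 1 = polar (s + 1) (s - 1). *)

From HB Require Import structures.
From mathcomp Require Import all_boot all_order all_algebra.
From mathcomp Require Import all_classical all_reals all_analysis.
From mathcomp Require Import ring lra.
Import Order.TTheory GRing.Theory Num.Theory.
Import numFieldNormedType.Exports.
Local Open Scope classical_set_scope.
Local Open Scope ring_scope.
Set Implicit Arguments. Unset Strict Implicit. Unset Printing Implicit Defensive.

Section DirectionalDerivatives.
Variables (R : realType) (V : normedModType R).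

Lemma is_derive_quadratic (f : V -> R) (x v : V) (d c : R) :
  (forall h : R, f (x + h *: v) = f x + h * d + h ^+ 2 * c) -> is_derive x v f d.
Proof.
move=> f_quad.
have quotient_cvg :
    (fun h => h^-1 *: ((f \o shift x) (h *: v) - f x)) @ 0^' --> d.
  apply: (@cvg_trans _ ((fun h : R => d + h * c) @ 0^')).
    apply: near_eq_cvg; near=> h.
    have h_neq0 : h != 0 by near: h; exact: nbhs_dnbhs_neq.
    rewrite /= /shift (addrC _ x) f_quad /GRing.scale /=; field; exact: h_neq0.
  apply: cvg_within_filter.
  have lin_cvg : (fun h : R => d + h * c) @ 0 --> d + 0 * c.
    by apply: cvgD; [exact: cvg_cst | apply: cvgMl; exact: cvg_id].
  by rewrite mul0r addr0 in lin_cvg.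
apply: DeriveDef; first by apply/cvg_ex; exists d.
exact: cvg_lim quotient_cvg.
Unshelve. all: by end_near.
Qed.

Lemma is_derive_line (f : V -> R) (a v : V) (t d : R) :
  is_derive (a + t *: v) v f d -> is_derive t 1 (fun x => f (a + x *: v)) d.
Proof.
have same_quotient :
    (fun h : R => h^-1 *:
       (((fun x => f (a + x *: v)) \o shift t) (h *: 1) - f (a + t *: v))) =
    (fun h => h^-1 *: ((f \o shift (a + t *: v)) (h *: v) - f (a + t *: v))).
  by apply: funext => h; rewrite /= /shift scaler1 scalerDl addrCA.
move=> [der_f <-]; apply: DeriveDef.
  by rewrite /derivable same_quotient.
by rewrite /derive same_quotient.
Qed.

Lemma is_deriveVf (f : V -> R) (x v : V) (d : R) : f x != 0 ->
  is_derive x v f d -> is_derive x v (fun y => (f y)^-1) (- (f x) ^- 2 * d).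
Proof.
move=> fx_neq0 [der_f <-]; apply: DeriveDef; first exact: derivableV.
exact: deriveV.
Qed.

End DirectionalDerivatives.

Lemma Rintegral_is_derive (R : realType) (F f : R -> R) (a b : R) : a < b ->
  {in `[a, b], forall t : R, is_derive t (1 : R) F (f t)} ->
  {within `[a, b], continuous f} ->
  \int[@lebesgue_measure R]_(t in `[a, b]) f t = F b - F a.
Proof.
move=> ab der_F cont_f.
have cont_F t : t \in `[a, b] -> {for t, continuous F}.
  move=> t_ab; apply/differentiable_continuous/derivable1_diffP.
  by have [] := der_F t t_ab.
have a_ab : a \in `[a, b] by rewrite in_itv /= lexx ltW.
have b_ab : b \in `[a, b] by rewrite in_itv /= lexx ltW.
have oo_cc t : t \in `]a, b[ -> t \in `[a, b].
  by rewrite !in_itv /= => /andP[a_t t_b]; rewrite !ltW.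
rewrite /Rintegral (@continuous_FTC2 _ f F a b) //.
- split.
  + by move=> t /oo_cc /der_F [].
  + exact/cvg_at_right_filter/cont_F.
  + exact/cvg_at_left_filter/cont_F.
- by move=> t /oo_cc /der_F der_Ft; rewrite derive1E derive_val.
Qed.

Lemma expR_half_ln (R : realType) (x : R) :
  0 < x -> expR (2^-1 * ln x) = Num.sqrt x.
Proof. by move=> x_gt0; rewrite -powR12_sqrt ?ltW // /powR gt_eqF. Qed.

Section Coordinates.
Variables (R : realType) (n : nat).
Implicit Types (u v x y c s : 'cV[R]_n).

Lemma vdotC u v : vdot u v = vdot v u.
Proof. by apply: eq_bigr => i _; rewrite mulrC. Qed.

Lemma vdotZl (a : R) u v : vdot (a *: u) v = a * vdot u v.
Proof. by rewrite /vdot mulr_sumr; apply: eq_bigr => i _; rewrite mxE mulrA. Qed.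

Lemma vdot_self_eq0 u : (vdot u u == 0) = (u == 0).
Proof.
apply/eqP/eqP => [uu0|->]; last first.
  by rewrite /vdot big1 // => i _; rewrite mxE mul0r.
have sq0 i : u i 0 * u i 0 = 0.
  by apply: (psumr_eq0P _ uu0) => // k _; rewrite -expr2 sqr_ge0.
apply/matrixP => i j; rewrite ord1 mxE.
by apply/eqP; rewrite -sqrf_eq0 expr2 sq0.
Qed.

Lemma scalar_delta_expansion (f : 'cV[R]_n -> R) : scalar f ->
  forall x, f x = \sum_i x i 0 * f (delta_mx i 0).
Proof.
move=> f_scalar x.
pose F : {scalar 'cV[R]_n} := HB.pack f (GRing.isLinear.Build _ _ _ _ f f_scalar).
rewrite -[f x]/(F x) {1}(matrix_sum_delta x) linear_sum; apply: eq_bigr => i _.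
by rewrite big_ord1 scalarZ.
Qed.

Lemma bilinear_bound (f : 'cV[R]_n -> 'cV[R]_n -> R) x y (a b : R) :
  bilinear_for *%R *%R f ->
  (forall i, `|x i 0| <= a) -> (forall j, `|y j 0| <= b) ->
  `|f x y| <= a * b * \sum_i \sum_j `|f (delta_mx i 0) (delta_mx j 0)|.
Proof.
move=> [f_linl f_linr] x_le y_le.
rewrite (scalar_delta_expansion (f_linl y)) mulr_sumr.
apply: le_trans (ler_norm_sum _ _ _) _; apply: ler_sum => i _.
rewrite normrM -mulrA (scalar_delta_expansion (f_linr _)).
apply: ler_pM => //; apply: le_trans (ler_norm_sum _ _ _) _.
rewrite mulr_sumr; apply: ler_sum => j _; rewrite normrM.
by apply: ler_wpM2r.
Qed.

Lemma eball_coord c r s : 0 <= r -> eball c r s -> forall i, `|s i 0 - c i 0| < r.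
Proof.
move=> r_ge0 cs i; rewrite -ltr_sqr ?nnegrE // real_normK ?num_real //.
apply: le_lt_trans cs; rewrite (bigD1 i) //= lerDl.
by apply: sumr_ge0 => j _; exact: sqr_ge0.
Qed.

Lemma eball_segment c r s (t : R) : 0 <= t <= 1 -> eball c r s ->
  eball c r (c + t *: (s - c)).
Proof.
move=> /andP[t_ge0 t_le1] cs; rewrite /eball.
under eq_bigr do rewrite !mxE addrAC subrr add0r exprMn.
rewrite -mulr_sumr; apply: le_lt_trans cs.
apply: ler_piMl; last exact: exprn_ile1.
by apply: sumr_ge0 => i _; exact: sqr_ge0.
Qed.

End Coordinates.

Section RealStarAlgebra.
Variables (R : realType) (n : nat) (mul : 'cV[R]_n -> 'cV[R]_n -> 'cV[R]_n)
  (one : 'cV[R]_n) (star : 'cV[R]_n -> 'cV[R]_n) (N : 'cV[R]_n -> R).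
Hypothesis algA : real_star_algebra mul one star.
Hypothesis normN : is_algebraic_norm mul one star N.
Implicit Types (x y z s v w : 'cV[R]_n).

Let mul_bilinear : bilinear_for *:%R *:%R mul.
Proof.
case: algA => linl [linr _].
by split=> [z a x y | z a x y]; [exact: linl | exact: linr].
Qed.
Let mul1x x : mul one x = x. Proof. by case: algA => _ [_ [/(_ x)[]]]. Qed.
Let mulx1 x : mul x one = x. Proof. by case: algA => _ [_ [/(_ x)[]]]. Qed.
Let one_neq0 : one != 0. Proof. by case: algA => _ [_ [_ []]]. Qed.
Let star_linear : linear star. Proof. by case: algA => _ [_ [_ [_ []]]]. Qed.
Let starM x y : star (mul x y) = mul (star y) (star x).
Proof. by case: algA => _ [_ [_ [_ [_ []]]]]. Qed.
Let starK : involutive star. Proof. by case: algA => _ [_ [_ [_ [_ [_ []]]]]]. Qed.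
Let star_fixed x : star x = x -> exists c : R, x = c *: one.
Proof. by case: algA => _ [_ [_ [_ [_ [_ [_ ]]]]]]; apply. Qed.

HB.instance Definition _ := GRing.isLinear.Build R _ _ _ star star_linear.
HB.instance Definition _ := bilinear_isBilinear.Build R _ _ _ _ _ mul mul_bilinear.

Lemma star1 : star one = one.
Proof. by have := congr1 star (mulx1 (star one)); rewrite starM !starK mulx1. Qed.

(* z + z^* is a real multiple of 1, so its coefficient can be read off by the
   dot product with 1. *)
Definition re z : R := vdot (z + star z) one / (2 * vdot one one).
Arguments re : simpl never.

Lemma re_spec z : z + star z = (2 * re z) *: one.
Proof.
have [c zc] : exists c : R, z + star z = c *: one.
  by apply: star_fixed; rewrite linearD /= starK addrC.
have oo_neq0 : vdot one one != 0 by rewrite vdot_self_eq0.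
by rewrite zc /re zc vdotZl; congr (_ *: _); field.
Qed.

Lemma re_is_scalar : scalar re.
Proof.
move=> a x y; rewrite /re linearP /= addrACA -scalerDr /vdot.
rewrite (eq_bigr (fun i =>
  a * ((x + star x) i 0 * one i 0) + (y + star y) i 0 * one i 0)).
  by rewrite big_split /= -mulr_sumr mulrDl mulrA.
by move=> i _; rewrite !mxE mulrDl mulrA.
Qed.

HB.instance Definition _ := GRing.isLinear.Build R _ _ _ re re_is_scalar.

Lemma re_star z : re (star z) = re z.
Proof. by rewrite /re starK addrC. Qed.

Lemma re1 : re one = 1.
Proof.
have oo_neq0 : vdot one one != 0 by rewrite vdot_self_eq0.
by rewrite /re star1 -mulr2n -scaler_nat vdotZl mulfV // mulf_neq0.
Qed.

Lemma starE z : star z = (2 * re z) *: one - z.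
Proof. by rewrite -re_spec addrC addKr. Qed.

Lemma reC x y : re (mul x y) = re (mul y x).
Proof.
(* Writing y^* = b 1 - y and x^* = a 1 - x makes x y + (x y)^* symmetric. *)
suff same_sum : mul x y + star (mul x y) = mul y x + star (mul y x).
  by rewrite /re same_sum.
rewrite !starM !starE; move: (2 * re x) (2 * re y) => a b.
rewrite !(linearBl, linearBr, linearZl_LR, linearZr_LR) /= !(mul1x, mulx1).
by apply/matrixP => i j; rewrite !mxE; ring.
Qed.

Definition polar x y : R := re (mul x (star y)).
Arguments polar : simpl never.

Lemma polarC x y : polar y x = polar x y.
Proof. by rewrite /polar -re_star starM starK. Qed.

Lemma polar_bilinear : bilinear_for *%R *%R polar.
Proof.
split=> [z a x y | z a x y]; rewrite /polar.
  by rewrite linearPl /= scalarP.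
by rewrite linearP /= linearPr /= scalarP.
Qed.

HB.instance Definition _ := bilinear_isBilinear.Build R _ _ _ _ _ polar polar_bilinear.

Lemma N_polar s : N s = polar s s.
Proof. by rewrite /polar normN scalarZ /= re1 mulr1. Qed.

Lemma N1 : N one = 1.
Proof. by rewrite N_polar /polar star1 mul1x re1. Qed.

Lemma N_expand s v (h : R) :
  N (s + h *: v) = N s + h * (2 * polar s v) + h ^+ 2 * N v.
Proof.
rewrite !N_polar [LHS]linearDl ![in LHS]linearDr ![in LHS]linearZl_LR.
by rewrite ![in LHS]linearZr_LR /= (polarC v s); ring.
Qed.

Lemma is_derive_N s v : is_derive s v N (2 * polar s v).
Proof. by apply: is_derive_quadratic => h; exact: N_expand. Qed.

Lemma is_derive_polarl w s v : is_derive s v (polar ^~ w) (polar v w).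
Proof.
apply: (@is_derive_quadratic _ _ _ _ _ _ 0) => h.
by rewrite [LHS]linearDl [in LHS]linearZl_LR /=; ring.
Qed.

Lemma is_derive_polar_div_N w s v : N s != 0 ->
  is_derive s v (fun t => polar t w / N t)
    (polar v w / N s - 2 * polar s v * polar s w / N s ^+ 2).
Proof.
move=> Ns_neq0.
have der_invN := is_deriveVf Ns_neq0 (is_derive_N s v).
apply: is_derive_eq (is_deriveM (is_derive_polarl w s v) der_invN) _.
by rewrite /GRing.scale /=; field.
Qed.

Definition re_mul_mx : 'M[R]_n :=
  \matrix_(i, j) re (mul (delta_mx i 0) (delta_mx j 0)).

Lemma re_mul_mx_sym : re_mul_mx^T = re_mul_mx.
Proof. by apply/matrixP => i j; rewrite !mxE reC. Qed.

Lemma re_mul_mx_star s i : (re_mul_mx *m star s) i 0 = polar s (delta_mx i 0).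
Proof.
rewrite polarC /polar mxE [in RHS](matrix_sum_delta (star s)).
rewrite linear_sumr linear_sum; apply: eq_bigr => j _.
by rewrite big_ord1 [in RHS]linearZr_LR scalarZ /= mxE mulrC.
Qed.

Lemma uformE s i : uform star N re_mul_mx s i 0 = polar s (delta_mx i 0) / N s.
Proof. by rewrite /uform /ainv -scalemxAr mxE re_mul_mx_star mulrC. Qed.

Lemma vdot_uform s x : vdot (uform star N re_mul_mx s) x = polar s x / N s.
Proof.
rewrite (scalar_delta_expansion (polar_bilinear.2 s)) mulr_suml.
by rewrite /vdot; apply: eq_bigr => i _; rewrite uformE mulrC mulrA.
Qed.

Lemma uform_normalized s : N s != 0 -> vdot s (re_mul_mx *m ainv star N s) = 1.
Proof. by move=> Ns_neq0; rewrite vdotC vdot_uform -N_polar divff. Qed.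

Lemma uform_closed s : N s != 0 -> forall i j : 'I_n,
  derivable (fun t => uform star N re_mul_mx t i 0) s (delta_mx j 0) /\
  derivable (fun t => uform star N re_mul_mx t j 0) s (delta_mx i 0) /\
  'D_(delta_mx j 0) (fun t => uform star N re_mul_mx t i 0) s =
  'D_(delta_mx i 0) (fun t => uform star N re_mul_mx t j 0) s.
Proof.
move=> Ns_neq0 i j.
have uform_fun k : (fun t => uform star N re_mul_mx t k 0) =
    (fun t => polar t (delta_mx k 0) / N t).
  by apply: funext => t; rewrite uformE.
rewrite !uform_fun.
have [der_i ->] := is_derive_polar_div_N (delta_mx i 0) (delta_mx j 0) Ns_neq0.
have [der_j ->] := is_derive_polar_div_N (delta_mx j 0) (delta_mx i 0) Ns_neq0.
by do 2 split => //; rewrite (polarC (delta_mx i 0)); ring.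
Qed.

Lemma N_gt0_near_one :
  exists2 r : R, 0 < r & forall s, eball one r s -> 0 < N s.
Proof.
(* On the ball of radius r the coordinates of s + 1 and s - 1 are bounded by a
   and r, so |N s - 1| <= a r K, which is < 1 for r = 1 / (1 + a K). *)
pose K := \sum_i \sum_j `|polar (delta_mx i 0) (delta_mx j 0) : R|.
pose a := 1 + 2 * \sum_i `|one i 0|.
have K_ge0 : 0 <= K by do 2 apply: sumr_ge0 => ? _.
have a_ge1 : 1 <= a by rewrite lerDl mulr_ge0 // sumr_ge0.
have aK_ge0 : 0 <= a * K by rewrite mulr_ge0 // (le_trans ler01).
exists (1 + a * K)^-1 => [|s ball_s]; first by rewrite invr_gt0 ltr_pwDl.
have r_le1 : (1 + a * K)^-1 <= 1 by rewrite invf_le1 ?ler_wpDr ?ltr_pwDl.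
have near_s i : `|(s - one) i 0| <= (1 + a * K)^-1.
  by rewrite !mxE; apply/ltW/eball_coord => //; rewrite invr_ge0 addr_ge0.
have Ns_sub1 : N s - 1 = polar (s + one) (s - one).
  rewrite -N1 !N_polar [RHS]linearDl /= !linearBr /= (polarC s one); ring.
have : `|N s - 1| <= a * (1 + a * K)^-1 * K.
  rewrite Ns_sub1; apply: (bilinear_bound polar_bilinear _ near_s) => i.
  have one_le : `|one i 0| <= \sum_j `|one j 0|.
    by rewrite (bigD1 i) //= lerDl sumr_ge0.
  have := near_s i; rewrite !mxE => near_si.
  rewrite (_ : s i 0 + one i 0 = (s i 0 - one i 0) + 2 * one i 0); last by ring.
  apply: le_trans (ler_normD _ _) _; rewrite normrM ger0_norm //.
  by apply: lerD; [exact: le_trans r_le1 | rewrite ler_pM2l].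
have aK_lt1 : a * (1 + a * K)^-1 * K < 1.
  by rewrite mulrAC ltr_pdivrMr ?ltr_pwDl // mul1r ltrDr.
rewrite ler_norml => /andP[lb _]; lra.
Qed.

Lemma special_unital_norm_sqrt r s : (forall x, eball one r x -> 0 < N x) ->
  eball one r s -> special_unital_norm one star N re_mul_mx s = Num.sqrt (N s).
Proof.
move=> N_gt0 ball_s; rewrite /special_unital_norm; set h := s - one.
have N_seg_gt0 t : 0 <= t <= 1 -> 0 < N (one + t *: h).
  by move=> t01; apply/N_gt0/eball_segment.
under [X in Rintegral _ _ X]funext => t do rewrite vdot_uform.
rewrite (@Rintegral_is_derive _ (fun t => 2^-1 * ln (N (one + t *: h)))) //.
- rewrite scale1r scale0r addr0 /h (addrC one) subrK N1 ln1 mulr0 subr0.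
  exact/expR_half_ln/N_gt0.
- move=> t /[!in_itv] /= /N_seg_gt0 N_t_gt0.
  have der_N_seg := is_derive_line (is_derive_N (one + t *: h) h).
  apply: is_derive_eq.
    exact: is_deriveZ (is_derive1_comp (is_derive1_ln N_t_gt0) der_N_seg).
  by rewrite /GRing.scale /=; field; rewrite gt_eqF.
- apply: derivable_within_continuous => t /[!in_itv] /=.
  move=> /N_seg_gt0 /lt0r_neq0 N_t_neq0.
  by have [] := is_derive_line (is_derive_polar_div_N h h N_t_neq0).
Qed.

End RealStarAlgebra.

Unset Implicit Arguments.

Theorem proposition10p8 (R : realType) (n : nat)
  (mul : 'cV[R]_n -> 'cV[R]_n -> 'cV[R]_n) (one : 'cV[R]_n)
  (star : 'cV[R]_n -> 'cV[R]_n) (N : 'cV[R]_n -> R) :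
  real_star_algebra mul one star ->
  is_algebraic_norm mul one star N ->
  exists (L : 'M[R]_n) (r0 : R),
    normalized_uncurling_metric one star N L r0 /\
    exists r : R, 0 < r /\ r <= r0 /\
      forall s : 'cV[R]_n, eball one r s ->
        special_unital_norm one star N L s = Num.sqrt (N s).
Proof.
move=> algA normN.
have [r r_gt0 N_gt0] := N_gt0_near_one algA normN.
have N_neq0 s : eball one r s -> N s != 0 by move/N_gt0/lt0r_neq0.
exists (re_mul_mx mul one star), r; split.
  split=> //.
  - exact: re_mul_mx_sym algA.
  - by move=> s /N_neq0 /(uform_closed algA normN).
  - by exists r; split=> // s /N_neq0 /(uform_normalized algA normN).
by exists r; split=> //; split=> // s; exact: special_unital_norm_sqrt.
Qed.
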